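(* Let $\mathcal{X}^{+}$ be any Artin spherical monoid with its classical generators $x_1,\dots,x_n$ (one generator per vertex of the Coxeter graph), and let $a_k$ denote the number of elements of $\mathcal{X}^{+}$ of length $k$. Then the sequence $(a_k)_{k\ge 1}$ has growth rate less than $4$, i.e. $\limsup_{k\to\infty} a_k^{1/k}<4$.
   Context: A Coxeter graph on vertices $x_1,\dots,x_n$ assigns to each pair $i\neq j$ a label $r_{ij}\in\{2,3,4,\dots\}\cup\{\infty\}$ (no edge means $r_{ij}=2$, an unlabeled edge means $r_{ij}=3$). The associated Artin monoid is $\langle x_1,\dots,x_n \mid x_ix_jx_ix_j\cdots = x_jx_ix_jx_i\cdots\ (\text{both sides of length } r_{ij}),\ r_{ij}<\infty\rangle$; since the relations are homogeneous, every element has a well-defined length. An Artin spherical monoid is the Artin monoid of a finite Coxeter graph each of whose connected components is one of: $A_n$ ($n\ge1$, a path $x_1-\cdots-x_n$ with all labels $3$); $B_n$ ($n\ge2$, the same path with the last edge $x_{n-1}x_n$ labeled $4$); $D_n$ ($n\ge4$, a path $x_1-\cdots-x_{n-2}$ with $x_{n-1}$ and $x_n$ both joined to $x_{n-2}$, all labels $3$); $E_n$ ($n=6,7,8$, a path $x_1-x_2-x_3-x_5-x_6-\cdots-x_n$ with $x_4$ joined to $x_3$, all labels $3$); $F_4$ (path $x_1-x_2-x_3-x_4$ with $x_2x_3$ labeled $4$, other labels $3$); $G_2$ (one edge labeled $6$); $H_3$, $H_4$ (paths on $3$, resp. $4$ vertices with the edge $x_1x_2$ labeled $5$ and other labels $3$);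 $I_2(p)$ ($p\ge5$, $p\ne6$, one edge labeled $p$). A sequence $(s_k)$ of positive numbers has growth rate less than $\gamma$ if $\limsup_k \exp(\log(s_k)/k)<\gamma$. *)

From HB Require Import structures.
From mathcomp Require Import all_boot all_order all_algebra all_fingroup.
From mathcomp Require Import all_classical all_reals all_analysis.
From mathcomp Require Import Rstruct Rstruct_topology.
From Stdlib Require Rdefinitions.

Set Implicit Arguments.
Unset Strict Implicit.
Unset Printing Implicit Defensive.

(* A Coxeter graph on vertices 'I_n is given by labels m i j (for i <> j);
   spherical graphs only have finite labels, so labels are naturals here.
   Label 2 = no edge, 3 = unlabeled edge. *)

Fixpoint alt {n} (s t : 'I_n) (l : nat) : seq 'I_n :=
  if l is l'.+1 then s :: alt t s l' else [::].

Definition artin_step {n} (m : 'I_n -> 'I_n -> nat) (u v : seq 'I_n) : bool :=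
  [exists s : 'I_n, [exists t : 'I_n, (s != t) &&
     has (fun p => (take (m s t) (drop p u) == alt s t (m s t)) &&
                   (v == take p u ++ alt t s (m s t) ++ drop (p + m s t) u))
         (iota 0 (size u).+1)]].

(* The Artin monoid relation restricted to words of length k: since the
   relations are homogeneous, two words represent the same element of the
   monoid iff they are related by the equivalence closure of [artin_step]
   (the step relation is symmetric, so [connect] is that closure). *)
Definition artin_rel {n} (m : 'I_n -> 'I_n -> nat) (k : nat) :
  rel (k.-tuple 'I_n) := fun u v => artin_step m (val u) (val v).

Definition artin_count {n} (m : 'I_n -> 'I_n -> nat) (k : nat) : nat :=
  #| (fun u => finset (connect (@artin_rel n m k) u)) @: [set: k.-tuple 'I_n] |.

Inductive ctype :=
| TA of nat | TB of nat | TD of nat | TE6 | TE7 | TE8 | TF4 | TG2 | TH3 | TH4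
| TI2 of nat.

Definition ctype_valid (t : ctype) : bool :=
  match t with
  | TA k => 1 <= k
  | TB k => 2 <= k
  | TD k => 4 <= k
  | TI2 p => (5 <= p) && (p != 6)
  | _ => true
  end.

Definition ctype_rank (t : ctype) : nat :=
  match t with
  | TA k | TB k | TD k => k
  | TE6 => 6 | TE7 => 7 | TE8 => 8 | TF4 => 4 | TG2 => 2
  | TH3 => 3 | TH4 => 4 | TI2 _ => 2
  end.

(* label of the pair (i, j) with i < j (0-indexed vertices; vertex x_{i+1}
   of the paper is index i) *)
Definition ctype_lab_ord (t : ctype) (i j : nat) : nat :=
  match t with
  | TA k => if j == i.+1 then 3 else 2
  | TB k => if j == i.+1 then (if j == k.-1 then 4 else 3) else 2
  | TD k => (* path 0 - ... - (k-3); k-2 and k-1 joined to k-3 *)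
      if (j == i.+1) && (j <= k - 3) then 3
      else if (i == k - 3) && ((j == k - 2) || (j == k - 1)) then 3
      else 2
  | TE6 | TE7 | TE8 =>
      (* path 0-1-2-4-5-...; 3 joined to 2 *)
      if [|| (i == 0) && (j == 1), (i == 1) && (j == 2), (i == 2) && (j == 3),
             (i == 2) && (j == 4) | (4 <= i) && (j == i.+1)] then 3 else 2
  | TF4 => if j == i.+1 then (if i == 1 then 4 else 3) else 2
  | TG2 => if (i == 0) && (j == 1) then 6 else 2
  | TH3 | TH4 => if j == i.+1 then (if i == 0 then 5 else 3) else 2
  | TI2 p => if (i == 0) && (j == 1) then p else 2
  end.

Definition ctype_lab (t : ctype) (i j : nat) : nat :=
  ctype_lab_ord t (minn i j) (maxn i j).

(* block-diagonal label function of a disjoint union of components, with the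
   vertices of the components numbered consecutively *)
Fixpoint sum_lab (ts : seq ctype) (i j : nat) : nat :=
  match ts with
  | [::] => 2
  | t :: ts' =>
      let r := ctype_rank t in
      if (i < r) && (j < r) then ctype_lab t i j
      else if (r <= i) && (r <= j) then sum_lab ts' (i - r) (j - r)
      else 2
  end.

Definition spherical {n} (m : 'I_n -> 'I_n -> nat) : Prop :=
  exists ts : seq ctype,
    all ctype_valid ts /\ sumn (map ctype_rank ts) = n /\
    exists sigma : {perm 'I_n},
      forall i j : 'I_n, i != j -> m i j = sum_lab ts (sigma i) (sigma j).

Definition growth_limsup (s : nat -> nat) : \bar Rdefinitions.R :=
  limn_esup (fun k : nat =>
    (expR (ln (s k.+1)%:R / (k.+1)%:R) : Rdefinitions.R)%:E).

(* Number the generators so that each Coxeter component is an interval, in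
   the order of the standard diagrams.  Swapping adjacent commuting letters,
   every element of length k has a representative word without a "commuting
   descent" (adjacent commuting letters in decreasing order); these words are
   the paths of a digraph on the generators, so there are at most T (N/D)^k of
   them as soon as some positive weights V satisfy
   D * sum_(a -> b) V b <= N * V a.  Inside one component the weights 2^(r-i)
   of path-shaped diagrams (modified for D_n, ad hoc for E_n) give row sums
   below 4 V a; components are glued by putting later components, all of whose
   vertices succeed every earlier one, on geometrically smaller scales, which
   gives N = 4D - 1.  The constant T is then absorbed by the growth rate
   (2N + 1)/(2D) < 4. *)

From mathcomp Require Import all_boot all_order all_algebra all_fingroup.
From mathcomp Require Import all_classical all_reals all_analysis.
From mathcomp Require Import Rstruct Rstruct_topology.
From Stdlib Require Rdefinitions.
From mathcomp Require Import zify.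

Set Implicit Arguments.
Unset Strict Implicit.
Unset Printing Implicit Defensive.

Section ArtinWords.
Variables (n : nat) (m : 'I_n -> 'I_n -> nat).

Lemma size_alt (s t : 'I_n) l : size (alt s t l) = l.
Proof. by elim: l s t => [|l IH] s t //=; rewrite IH. Qed.

Lemma artin_step_commute p q (a b : 'I_n) : a != b -> m a b = 2 ->
  artin_step m (p ++ a :: b :: q) (p ++ b :: a :: q).
Proof.
move=> ab mab; apply/existsP; exists a; apply/existsP; exists b.
rewrite ab; apply/hasP; exists (size p); first by rewrite mem_iota size_cat /=; lia.
rewrite mab drop_size_cat // take_size_cat //= take0 eqxx.
by rewrite addnC -drop_drop drop_size_cat //= drop0.
Qed.

Section AdmissibleWords.
Variable pos : 'I_n -> nat.
Hypothesis pos_lt : forall x, pos x < n.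

Definition admissible (a b : 'I_n) : bool := (pos a <= pos b) || (m a b != 2).

Definition word_rank (w : seq 'I_n) : nat := foldl (fun r x => r * n + pos x) 0 w.

Lemma word_rank_swap p q (a b : 'I_n) : pos b < pos a ->
  word_rank (p ++ b :: a :: q) < word_rank (p ++ a :: b :: q).
Proof.
move=> ba; have n_gt0 : 0 < n by have := pos_lt a; lia.
have foldl_mono x y : x < y ->
    foldl (fun r c => r * n + pos c) x q < foldl (fun r c => r * n + pos c) y q.
  by elim: q x y => [|c q' IH] //= x y xy; apply: IH; rewrite ltn_add2r ltn_pmul2r.
rewrite /word_rank !foldl_cat /=; apply: foldl_mono.
by set r := foldl _ 0 p; have := pos_lt a; have := pos_lt b; nia.
Qed.

Lemma not_sorted_admissible (w : seq 'I_n) : ~~ sorted admissible w ->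
  exists p a b q, w = p ++ a :: b :: q /\ ~~ admissible a b.
Proof.
elim: w => [|x [|y s] IH] //=; case xy: (admissible x y) => /=.
  by case/IH => p [a [b [q [-> nab]]]]; exists (x :: p), a, b, q.
by move=> _; exists [::], x, y, s; rewrite xy.
Qed.

Lemma exists_admissible_rep k (u : k.-tuple 'I_n) :
  exists2 w : k.-tuple 'I_n, connect (@artin_rel n m k) u w & sorted admissible w.
Proof.
have [w uw w_min] := @arg_minnP _ _ (connect (@artin_rel n m k) u) word_rank (connect0 _ u).
exists w => //; apply/negPn/negP => /not_sorted_admissible [p [a [b [q [wE]]]]].
rewrite negb_or -ltnNge negbK => /andP [ba /eqP mab].
have ab : a != b by apply: contraTneq ba => ->; rewrite ltnn.
have size_w' : size (p ++ b :: a :: q) == k by rewrite -(size_tuple w) wE !size_cat.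
have uw' : connect (@artin_rel n m k) u (Tuple size_w').
  by apply: connect_trans uw (connect1 _); rewrite /artin_rel /= wE artin_step_commute.
by have := w_min _ uw'; rewrite leqNgt /= wE word_rank_swap.
Qed.

End AdmissibleWords.

Hypothesis m_sym : forall s t, s != t -> m s t = m t s.

Lemma artin_step_sym u v : artin_step m u v -> artin_step m v u.
Proof.
case/existsP => s /existsP [t /andP [st /hasP [p pu /andP [/eqP altE /eqP ->]]]].
move: pu; rewrite mem_iota add0n ltnS => pu.
set M := m s t in altE *.
have M_le : M <= size u - p.
  by have := size_alt s t M; rewrite -altE size_take_min size_drop; lia.
apply/existsP; exists t; apply/existsP; exists s.
rewrite eq_sym st m_sym 1?eq_sym // -/M.
set v' := take p u ++ alt t s M ++ drop (p + M) u.
have drop_v : drop p v' = alt t s M ++ drop (p + M) u by rewrite drop_size_cat // size_takel.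
have size_v : size v' = size u by rewrite !size_cat size_takel // size_alt size_drop; lia.
apply/hasP; exists p; first by rewrite mem_iota add0n ltnS size_v.
rewrite drop_v take_size_cat ?size_alt // eqxx take_size_cat ?size_takel //.
rewrite (addnC p M) -drop_drop drop_v drop_size_cat ?size_alt // -altE.
by rewrite (addnC p M) -drop_drop !cat_take_drop eqxx.
Qed.

Lemma artin_rel_sym k : symmetric (@artin_rel n m k).
Proof. by move=> u v; apply/idP/idP; apply: artin_step_sym. Qed.

Lemma artin_count_le_admissible (pos : 'I_n -> nat) k : (forall x, pos x < n) ->
  artin_count m k <= #|[set w : k.-tuple 'I_n | sorted (admissible pos) w]|.
Proof.
move=> pos_lt; apply: leq_trans (leq_imset_card (fun u => finset (connect _ u)) _).
apply/subset_leq_card/fintype.subsetP => _ /imsetP [u _ ->].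
have [w uw w_adm] := exists_admissible_rep pos_lt u.
apply/imsetP; exists w; first by rewrite inE.
have class_sym := sym_connect_sym (@artin_rel_sym k).
by apply/setP => x; rewrite !inE; apply/idP/idP; apply: connect_trans; rewrite // class_sym.
Qed.

End ArtinWords.

Lemma card_tuple_cons (T : finType) k (P : pred (seq T)) :
  #|[set w : k.+1.-tuple T | P w]| = \sum_x #|[set w : k.-tuple T | P (x :: w)]|.
Proof.
pose cons_tuple (xw : T * k.-tuple T) := [tuple of xw.1 :: xw.2].
have cons_inj : injective cons_tuple.
  by move=> [x w] [y v] /(congr1 val) [-> /val_inj ->].
have -> : [set w : k.+1.-tuple T | P w] =
    cons_tuple @: [set xw : T * k.-tuple T | P (xw.1 :: xw.2)].
  apply/setP => w; case/tupleP: w => x w; rewrite inE.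
  apply/idP/imsetP => [Pxw | [yv Pyv ->]]; first by exists (x, w); rewrite ?inE.
  by rewrite inE in Pyv.
rewrite (card_imset _ cons_inj) -sum1dep_card.
under [RHS]eq_bigr do rewrite -sum1dep_card.
by rewrite pair_big_dep.
Qed.

Section TransferMatrix.
Variables (n : nat) (e : rel 'I_n) (V : 'I_n -> nat) (D N : nat).
Hypothesis V_gt0 : forall a, 0 < V a.
Hypothesis V_sub_eigen : forall a, D * (\sum_(b | e a b) V b) <= N * V a.

Lemma card_path_bound k a : D ^ k * #|[set w : k.-tuple 'I_n | path e a w]| <= N ^ k * V a.
Proof.
elim: k a => [|k IH] a.
  by rewrite !mul1n; apply: leq_trans (max_card _) _; rewrite card_tuple.
have card_split : #|[set w : k.+1.-tuple 'I_n | path e a w]| =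
    \sum_(b | e a b) #|[set w : k.-tuple 'I_n | path e b w]|.
  rewrite card_tuple_cons (bigID (e a)) /= [X in _ + X]big1 ?addn0 => [|b /negbTE eab].
    by apply: eq_bigr => b eab; apply: eq_card => w; rewrite !inE /= eab.
  by apply/eqP; rewrite cards_eq0; apply/eqP/setP => w; rewrite !inE /= eab.
rewrite card_split expnS -mulnA big_distrr /=.
apply: (leq_trans (leq_mul (leqnn D) (leq_sum _ (fun b (_ : e a b) => IH b)))).
by rewrite -big_distrr /= mulnCA expnS [N * _]mulnC -mulnA leq_mul2l V_sub_eigen orbT.
Qed.

Lemma card_sorted_bound k :
  D ^ k * #|[set w : k.+1.-tuple 'I_n | sorted e w]| <= N ^ k * \sum_a V a.
Proof.
rewrite card_tuple_cons !big_distrr /=.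
by apply: leq_sum => a _; apply: card_path_bound.
Qed.

End TransferMatrix.

Lemma sum_pow2_tail i r s : i <= r <= s ->
  \sum_(i <= j < r) 2 ^ (s - j) + 2 ^ (s - r).+1 = 2 ^ (s - i).+1.
Proof.
elim: r => [|r IH] /andP [ir rs].
  by move: ir; rewrite leqn0 => /eqP ->; rewrite big_geq.
have [-> | ir'] := eqVneq i r.+1; first by rewrite big_geq.
rewrite big_nat_recr /=; last by lia.
have -> : (s - r.+1).+1 = s - r by lia.
by rewrite -addnA addnn -mul2n -expnS -IH //; lia.
Qed.

Lemma sum_nat_le_single (F : nat -> nat) i c :
  (forall j, j < i -> j != c -> F j = 0) -> \sum_(0 <= j < i) F j <= F c.
Proof.
move=> F0; have sum0 a b : b <= i -> (forall j, a <= j < b -> j != c) ->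
    \sum_(a <= j < b) F j = 0.
  by move=> bi ne; rewrite big_nat_cond big1 // => j /andP [jab _]; apply: F0; [lia | exact: ne].
have [ci | ic] := ltnP c i; last by rewrite sum0 // => j; lia.
rewrite (big_cat_nat (leq0n c) (ltnW ci)) (big_ltn ci) /= !sum0 //; lia.
Qed.

(* The E_n weights are ad hoc; [succ_weight_lt] checks them by computation. *)
Definition type_weight (t : ctype) (i : nat) : nat :=
  match t with
  | TD k => if i == k.-1 then 3 else 2 ^ (k - i)
  | TE6 => nth 1 [:: 13; 13; 9; 6; 4; 2] i
  | TE7 => nth 1 [:: 32; 32; 23; 15; 11; 5; 2] i
  | TE8 => nth 1 [:: 71; 71; 52; 34; 25; 11; 5; 2] i
  | _ => 2 ^ (ctype_rank t - i)
  end.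

Lemma type_weight_gt0 t i : 0 < type_weight t i.
Proof.
case: t => [k|k|k| | | | | | | |p] /=; rewrite ?expn_gt0 //; first by case: ifP; rewrite ?expn_gt0.
all: by do 8?[case: i => [|i] //]; rewrite /= ?nth_nil.
Qed.

Definition succ_weight (t : ctype) (i : nat) : nat :=
  \sum_(0 <= j < ctype_rank t)
    (if (i <= j) || (ctype_lab t i j != 2) then type_weight t j else 0).

Lemma succ_weight_le t i c : i <= ctype_rank t ->
    (forall j, j < i -> ctype_lab t i j != 2 -> j = c) ->
  succ_weight t i <= type_weight t c + \sum_(i <= j < ctype_rank t) type_weight t j.
Proof.
move=> ir lab_c; rewrite /succ_weight (big_cat_nat (leq0n i) ir) /=.
rewrite [X in _ + X](@eq_big_nat _ _ _ _ _ _ (type_weight t)); last first.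
  by move=> j /andP [-> _].
rewrite leq_add2r; apply: leq_trans (@sum_nat_le_single _ i c _) _.
- by move=> j ji jc; rewrite leqNgt ji /=; case: ifPn => // /(lab_c _ ji) /eqP; rewrite (negbTE jc).
- by case: ifP.
Qed.

Definition ctype_is_path (t : ctype) : bool :=
  match t with TD _ | TE6 | TE7 | TE8 => false | _ => true end.

Lemma ctype_lab_path t i j : ctype_is_path t -> j < i -> ctype_lab t i j != 2 -> j = i.-1.
Proof.
move=> pt ji; rewrite /ctype_lab (minn_idPr (ltnW ji)) (maxn_idPl (ltnW ji)).
by case: t pt => [k|k|k| | | | | | | |p] //= _; repeat case: ifP => //; lia.
Qed.

Lemma succ_weight_path t i : ctype_is_path t -> i < ctype_rank t ->
  succ_weight t i < 4 * type_weight t i.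
Proof.
move=> pt ir; set r := ctype_rank t.
have w_pow j : type_weight t j = 2 ^ (r - j) by case: t pt @r {ir}.
apply: leq_ltn_trans (succ_weight_le (ltnW ir) (fun j => @ctype_lab_path t i j pt)) _.
under eq_big_nat => j _ do rewrite w_pow.
have tail : \sum_(i <= j < r) 2 ^ (r - j) + 2 = 2 * 2 ^ (r - i).
  by rewrite -expnS -(@sum_pow2_tail i r r) ?subnn ?(ltnW ir) ?leqnn.
have prev : 2 ^ (r - i.-1) <= 2 * 2 ^ (r - i) by rewrite -expnS leq_pexp2l //; lia.
by rewrite !w_pow -/r; lia.
Qed.

Lemma ctype_lab_D k i j : i < k -> j < i -> ctype_lab (TD k) i j != 2 ->
  j = if i == k.-1 then k - 3 else i.-1.
Proof.
move=> ik ji; rewrite /ctype_lab (minn_idPr (ltnW ji)) (maxn_idPl (ltnW ji)) /=.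
by repeat case: ifP => //; lia.
Qed.

Lemma succ_weight_D k i : 4 <= k -> i < k -> succ_weight (TD k) i < 4 * type_weight (TD k) i.
Proof.
move=> k4 ik.
apply: leq_ltn_trans (@succ_weight_le (TD k) i _ (ltnW ik) (fun j => @ctype_lab_D k i j ik)) _.
have k_last_range (F : nat -> nat) : \sum_(k.-1 <= j < k) F j = F k.-1.
  by rewrite big_ltn ?big_geq ?addn0 //; lia.
have [i_last | i_inner] := eqVneq i k.-1.
  rewrite i_last k_last_range /= !eqxx ifN; last by lia.
  by have -> : k - (k - 3) = 3 by lia.
rewrite (@big_cat_nat _ _ _ k.-1) /=; try lia.
rewrite k_last_range eqxx ifN ?i_inner ?ifN; try lia.
rewrite (@eq_big_nat _ _ _ _ _ _ (fun j => 2 ^ (k - j))); last by move=> j jk; rewrite ifN //; lia.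
have tail : \sum_(i <= j < k.-1) 2 ^ (k - j) + 4 = 2 * 2 ^ (k - i).
  rewrite -expnS -(@sum_pow2_tail i k.-1 k); last by lia.
  by have -> : (k - k.-1).+1 = 2 by lia.
have prev : 2 ^ (k - i.-1) <= 2 * 2 ^ (k - i) by rewrite -expnS leq_pexp2l //; lia.
lia.
Qed.

Lemma succ_weight_lt t i : ctype_valid t -> i < ctype_rank t ->
  succ_weight t i < 4 * type_weight t i.
Proof.
move=> tv ir; case pt: (ctype_is_path t); first exact: succ_weight_path.
case: t pt tv ir => // [k _ k4 ik | | |]; first exact: succ_weight_D.
all: by move=> _ _; do 8?[case: i => [|i] //]; rewrite /succ_weight unlock.
Qed.

Definition total_weight (t : ctype) : nat :=
  \sum_(0 <= i < ctype_rank t) type_weight t i.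

Lemma type_weight_le_total t i : i < ctype_rank t -> type_weight t i <= total_weight t.
Proof.
by move=> ir; rewrite /total_weight (bigD1_seq i) ?mem_index_iota ?iota_uniq //= leq_addr.
Qed.

(* Every vertex of a later component is an admissible successor of every
   vertex of an earlier one, so the components receive decreasing scales
   B ^ (number of components after them). *)
Fixpoint vertex_weight (B : nat) (ts : seq ctype) (p : nat) : nat :=
  match ts with
  | [::] => 1
  | t :: ts' => if p < ctype_rank t then B ^ size ts' * type_weight t p
                else vertex_weight B ts' (p - ctype_rank t)
  end.

Lemma vertex_weight_gt0 B ts p : 0 < B -> 0 < vertex_weight B ts p.
Proof.
move=> B_gt0; elim: ts p => [|t ts IH] p //=.
by case: ifP => _; rewrite ?muln_gt0 ?expn_gt0 ?B_gt0 ?type_weight_gt0.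
Qed.

Definition total_vertex_weight (B : nat) (ts : seq ctype) : nat :=
  \sum_(0 <= q < sumn (map ctype_rank ts)) vertex_weight B ts q.

Definition succ_vertex_weight (B : nat) (ts : seq ctype) (p : nat) : nat :=
  \sum_(0 <= q < sumn (map ctype_rank ts))
    (if (p <= q) || (sum_lab ts p q != 2) then vertex_weight B ts q else 0).

Lemma big_nat_add_split (F : nat -> nat) r s :
  \sum_(0 <= q < r + s) F q = \sum_(0 <= q < r) F q + \sum_(0 <= q < s) F (q + r).
Proof.
rewrite (big_cat_nat (leq0n r) (leq_addr s r)) /=; congr (_ + _).
by rewrite -{1}(add0n r) big_addn addKn.
Qed.

Lemma total_vertex_weight_cons B t ts : total_vertex_weight B (t :: ts) =
  B ^ size ts * total_weight t + total_vertex_weight B ts.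
Proof.
rewrite /total_vertex_weight /= big_nat_add_split big_distrr /=; congr (_ + _).
  by apply: eq_big_nat => q /andP [_ ->].
by apply: eq_big_nat => q _; rewrite ltnNge leq_addl addnK.
Qed.

Lemma succ_vertex_weight_cons_lt B t ts p : p < ctype_rank t ->
  succ_vertex_weight B (t :: ts) p = B ^ size ts * succ_weight t p + total_vertex_weight B ts.
Proof.
move=> pr; rewrite /succ_vertex_weight /= big_nat_add_split big_distrr /=; congr (_ + _).
  by apply: eq_big_nat => q /andP [_ qr]; rewrite pr qr /=; case: ifP; rewrite ?muln0.
apply: eq_big_nat => q _.
by rewrite (leq_trans (ltnW pr) (leq_addl _ _)) /= ltnNge leq_addl addnK.
Qed.

Lemma succ_vertex_weight_cons_ge B t ts p : ctype_rank t <= p ->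
  succ_vertex_weight B (t :: ts) p = succ_vertex_weight B ts (p - ctype_rank t).
Proof.
move=> rp; rewrite /succ_vertex_weight /= big_nat_add_split big_nat_cond big1 ?add0n.
  apply: eq_big_nat => q _; rewrite ltnNge rp leq_addl /= ltnNge leq_addl /= addnK.
  by rewrite leq_subLR addnC.
move=> q /andP [/andP [_ qr] _].
have -> : (p <= q) = false by lia.
have -> : (p < ctype_rank t) = false by lia.
have -> : (ctype_rank t <= q) = false by lia.
by rewrite andbF.
Qed.

Section CombinedWeights.
Variables D B : nat.
Hypothesis D2_lt_B : D * D < B.

Lemma total_vertex_weight_le ts : all (fun t => total_weight t < D) ts ->
  D * total_vertex_weight B ts <= B ^ size ts.
Proof.
elim: ts => [|t ts IH] /=; first by rewrite /total_vertex_weight big_geq ?muln0.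
case/andP => tD /IH; rewrite total_vertex_weight_cons mulnDr expnS => tsB.
have : B ^ size ts * (D * total_weight t).+1 <= B ^ size ts * B.
  by rewrite leq_mul2l (leq_ltn_trans _ D2_lt_B) ?orbT // leq_mul2l ltnW ?orbT.
by rewrite [B * _]mulnC; lia.
Qed.

Lemma succ_vertex_weight_le ts p : all ctype_valid ts ->
    all (fun t => total_weight t < D) ts -> p < sumn (map ctype_rank ts) ->
  D * succ_vertex_weight B ts p <= (4 * D).-1 * vertex_weight B ts p.
Proof.
elim: ts p => [|t ts IH] p //= /andP [tv tsv] /andP [tD tsD] pr.
have [p_in_t | p_after_t] := ltnP p (ctype_rank t).
- rewrite succ_vertex_weight_cons_lt //.
  have row : (D * succ_weight t p).+1 <= (4 * D).-1 * type_weight t p.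
    have := succ_weight_lt tv p_in_t.
    have := leq_ltn_trans (type_weight_le_total p_in_t) tD; nia.
  have := total_vertex_weight_le tsD; have := leq_mul (leqnn (B ^ size ts)) row; nia.
- rewrite succ_vertex_weight_cons_ge //; apply: IH => //; lia.
Qed.

End CombinedWeights.

Lemma sum_lab_sym ts i j : sum_lab ts i j = sum_lab ts j i.
Proof.
elim: ts i j => [|t ts IH] i j //=.
by rewrite andbC [(ctype_rank t <= i) && _]andbC IH /ctype_lab minnC maxnC.
Qed.

Lemma spherical_sym n (m : 'I_n -> 'I_n -> nat) :
  spherical m -> forall s t, s != t -> m s t = m t s.
Proof.
case=> ts [_ [_ [sigma m_lab]]] s t st.
by rewrite (m_lab _ _ st) (m_lab t s) 1?eq_sym // sum_lab_sym.
Qed.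

Lemma spherical_admissible_weights n (m : 'I_n -> 'I_n -> nat) : spherical m ->
  exists (pos V : 'I_n -> nat) (D : nat),
    [/\ forall x, pos x < n, forall a, 0 < V a, 0 < D &
        forall a, D * (\sum_(b | admissible m pos a b) V b) <= (4 * D).-1 * V a].
Proof.
case=> ts [tsv [rank_n [sigma m_lab]]].
pose D := (\sum_(t <- ts) total_weight t).+1.
have tsD : all (fun t => total_weight t < D) ts.
  rewrite {}/D; elim: ts {tsv rank_n m_lab} => //= t ts IH; rewrite big_cons ltnS leq_addr /=.
  by apply: sub_all IH => t' /leq_trans; apply; rewrite ltnS leq_addl.
pose B := (D * D).+1.
pose pos x := nat_of_ord (sigma x).
exists pos, (fun a => vertex_weight B ts (pos a)), D.
split=> // [x | a | a]; [exact: ltn_ord | exact: vertex_weight_gt0 |].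
have -> : \sum_(b | admissible m pos a b) vertex_weight B ts (pos b) =
    succ_vertex_weight B ts (pos a).
  rewrite big_mkcond /succ_vertex_weight rank_n big_mkord.
  rewrite [RHS](reindex_inj (@perm_inj _ sigma)) /=; apply: eq_bigr => b _.
  rewrite /admissible; case: (eqVneq a b) => [->|ab]; first by rewrite leqnn.
  by rewrite m_lab.
by apply: succ_vertex_weight_le; rewrite // rank_n ltn_ord.
Qed.

Lemma spherical_count_bound n (m : 'I_n -> 'I_n -> nat) : spherical m ->
  exists D N T, [/\ 0 < D, D <= N, N < 4 * D &
    forall k, D ^ k * artin_count m k.+1 <= N ^ k * T].
Proof.
move=> sph; have [pos [V [D [pos_lt V_gt0 D_gt0 V_row]]]] := spherical_admissible_weights sph.
exists D, (4 * D).-1, (\sum_a V a); split; try lia.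
move=> k; apply: leq_trans (card_sorted_bound V_gt0 V_row k).
by rewrite leq_mul2l artin_count_le_admissible ?orbT //; apply: spherical_sym.
Qed.

Lemma Bernoulli_expn x k : x ^ k * (x + k) <= x * x.+1 ^ k.
Proof.
elim: k => [|k IH]; first by rewrite expn0 mul1n muln1 addn0.
have : x ^ k <= x.+1 ^ k by case: k {IH} => [|k] //; rewrite leq_exp2r.
by rewrite !expnS; nia.
Qed.

Lemma leq_mul_expn_expnS x K k : K <= k -> K * x ^ k <= x.+1 ^ k.+1.
Proof.
move=> Kk; have := Bernoulli_expn x k; rewrite [x.+1 ^ k.+1]expnS; nia.
Qed.

Lemma geometric_bound_absorb_constant (s : nat -> nat) D N T k :
    (forall k, D ^ k * s k.+1 <= N ^ k * T) -> 2 * D * T <= k ->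
  (2 * D) ^ k.+1 * s k.+1 <= (2 * N).+1 ^ k.+1.
Proof.
move=> s_le Kk; apply: leq_trans (leq_mul_expn_expnS (2 * N) Kk).
have := leq_mul (leqnn (2 * D * 2 ^ k)) (s_le k).
by rewrite [(2 * D) ^ k.+1]expnS !expnMn; nia.
Qed.

Section GrowthRate.
Import Order.TTheory GRing.Theory Num.Theory.
Local Open Scope ring_scope.
Local Open Scope classical_set_scope.
Local Notation R := Rdefinitions.R.

Lemma expR_ln_div_le (a k : nat) (c : R) : 1 <= c -> a%:R <= c ^+ k.+1 ->
  expR (ln (a%:R : R) / k.+1%:R) <= c.
Proof.
move=> c_ge1 ac; have c_gt0 : 0 < c by apply: lt_le_trans c_ge1.
have [-> | a_gt0] := posnP a; first by rewrite ln0 // mul0r exp.expR0.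
rewrite -[leRHS]lnK ?posrE // ler_expR ler_pdivrMr ?ltr0n // mulr_natr.
by rewrite -lnXn // ler_ln ?posrE ?exprn_gt0 ?ltr0n.
Qed.

Lemma growth_limsup_le (s : nat -> nat) (c d K : nat) : (0 < d)%N -> (d <= c)%N ->
    (forall k, (K <= k)%N -> (d ^ k.+1 * s k.+1 <= c ^ k.+1)%N) ->
  (growth_limsup s <= (c%:R / d%:R : R)%:E)%E.
Proof.
move=> d_gt0 dc s_le; rewrite /growth_limsup /limn_esup /limf_esup.
apply: le_trans (ereal_inf_lbound _) _; first by exists [set k | (K <= k)%N]; [exists K|].
apply: ge_ereal_sup => _ [k /= Kk <-]; rewrite lee_fin; apply: expR_ln_div_le.
  by rewrite ler_pdivlMr ?ltr0n // mul1r ler_nat.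
rewrite expr_div_n ler_pdivlMr ?exprn_gt0 ?ltr0n // mulrC -!natrX -natrM ler_nat.
exact: s_le.
Qed.

Lemma growth_limsup_lt (s : nat -> nat) (c D N T : nat) :
    (0 < D)%N -> (D <= N)%N -> (N < c * D)%N ->
    (forall k, D ^ k * s k.+1 <= N ^ k * T)%N ->
  (growth_limsup s < (c%:R : R)%:E)%E.
Proof.
move=> D_gt0 DN Nc s_le.
apply: (le_lt_trans (growth_limsup_le (c := (2 * N).+1) (d := 2 * D) (K := 2 * D * T) _ _ _)).
- by rewrite muln_gt0.
- lia.
- by move=> k; apply: geometric_bound_absorb_constant.
rewrite lte_fin ltr_pdivrMr ?ltr0n ?muln_gt0 // -natrM ltr_nat; lia.
Qed.

End GrowthRate.

Theorem theorem1 (n : nat) (m : 'I_n -> 'I_n -> nat) :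
  0 < n -> spherical m ->
  (growth_limsup (artin_count m) < (4%:R : Rdefinitions.R)%:E)%E.
Proof.
move=> _ /spherical_count_bound [D [N [T [D_gt0 DN N_lt s_le]]]].
exact: growth_limsup_lt D_gt0 DN N_lt s_le.
Qed.
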